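(* Let $M\subset\mathbb{CP}^n$ be a smooth hypersurface defined by a homogeneous polynomial $F$ of degree $d$. Work in the affine chart $Z_0\neq0$ with coordinates $z_i=Z_i/Z_0$, $i=1,\dots,n$, let $f(z)=F(1,z_1,\dots,z_n)$, and on an open set where $\partial f/\partial z_1\ne0$ write $M$ locally as a graph $z_1=z_1(z_2,\dots,z_n)$ with $z_1$ holomorphic in $(z_2,\dots,z_n)$; put $a_i=\partial z_1/\partial z_i$ ($2\le i\le n$), $|z|^2=\sum_{i=1}^n|z_i|^2$, $|a|^2=\sum_{i=2}^n|a_i|^2$, $F_k=\frac{\partial F}{\partial Z_k}$ evaluated at $(1,z_1,\dots,z_n)$, and $\rho=\frac{\sum_{k=0}^n|F_k|^2}{(1+|z|^2)|F_1|^2}$. The restriction of the Fubini–Study form to $M$ is $\omega=\frac{\sqrt{-1}}{2\pi}\sum_{i,j=2}^n\tilde g_{i\bar j}dz_i\wedge d\bar z_j$ with $$\tilde g_{i\bar j}=\frac{\delta_{ij}+a_i\bar a_j}{1+|z|^2}-\frac{(\bar z_i+\bar z_1a_i)(z_j+z_1\bar a_j)}{(1+|z|^2)^2}.$$ Then the inverse matrix $\tilde g^{i\bar j}$ (characterized by $\sum_{j=2}^n\tilde g_{i\bar j}\tilde g^{k\bar j}=\delta_{ik}$) is $$\tilde g^{i\bar j}=\frac1\rho\Big(\rho(1+|z|^2)\delta_{ji}-a_j\bar a_i+\bar z_jz_i(1+|a|^2)\Big)-\frac1\rho\Big(a_jz_i\big(\textstyle\sum_{k=2}^n\bar a_k\bar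 z_k-\bar z_1\big)+\bar z_j\bar a_i\big(\sum_{k=2}^na_kz_k-z_1\big)\Big).$$
   Context: The Fubini–Study form on $\mathbb{CP}^n$ is $\omega_{FS}=\frac{\sqrt{-1}}{2\pi}\partial\bar\partial\log\sum_{k=0}^n|Z_k|^2$. *)

From HB Require Import structures.
From mathcomp Require Import all_boot all_order all_algebra.
From mathcomp Require Import all_classical all_reals all_analysis.
From mathcomp Require Import complex.
From mathcomp Require mpoly.
Set Implicit Arguments. Unset Strict Implicit. Unset Printing Implicit Defensive.
Import Order.TTheory GRing.Theory Num.Theory.
Import numFieldNormedType.Exports.
Local Open Scope ring_scope.
Local Open Scope classical_set_scope.

(* Conventions.  n = m.+1 ; homogeneous coordinates Z_0,...,Z_n are indexed
   by 'I_m.+2.  The affine chart Z_0 <> 0 has coordinates z_1,...,z_n.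
   The local graph z_1 = phi(z_2,...,z_n) has parameters (z_2,...,z_n),
   stored as a row vector w : 'rV_m, with w 0 j = z_(j+2). *)

Notation CC R := (R[i])%C.

Definition idx1 {m : nat} : 'I_m.+2 := lift ord0 ord0.
Definition idxw {m : nat} (j : 'I_m) : 'I_m.+2 := lift ord0 (lift ord0 j).

Definition chart_pt {R : rcfType} {m : nat} (z1 : CC R) (w : 'rV[CC R]_m)
    : 'I_m.+2 -> CC R :=
  fun k => match unlift ord0 k with
           | None => 1
           | Some k' => match unlift ord0 k' with
                        | None => z1
                        | Some j => w 0 j
                        end
           end.

Definition dF {R : rcfType} {m : nat} (F : mpoly.mpoly m.+2 (CC R))
    (k : 'I_m.+2) (Z : 'I_m.+2 -> CC R) : CC R :=
  mpoly.meval Z (mpoly.mderiv k F).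

Definition smooth_hypersurface {R : rcfType} {m : nat}
    (F : mpoly.mpoly m.+2 (CC R)) : Prop :=
  forall Z : 'I_m.+2 -> CC R, (exists k, Z k != 0) ->
    mpoly.meval Z F = 0 -> exists k, dF F k Z != 0.

Definition holomorphic_on {R : realType} {m : nat}
    (U : set 'rV[(CC R)^o]_m) (phi : 'rV[(CC R)^o]_m -> (CC R)^o) : Prop :=
  forall w, U w -> differentiable phi w.

(* a_j = d z_1 / d z_(j+2) : complex partial derivative *)
Definition pder {R : realType} {m : nat}
    (phi : 'rV[(CC R)^o]_m -> (CC R)^o) (w : 'rV[(CC R)^o]_m) (j : 'I_m)
    : CC R := 'D_(delta_mx 0 j) phi w.

Definition sqn {R : rcfType} (x : CC R) : CC R := x * x^*.

From HB Require Import structures.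
From mathcomp Require Import all_boot all_order all_algebra.
From mathcomp Require Import mpoly.
From mathcomp Require Import all_classical all_reals all_analysis.
From mathcomp Require Import complex.
From mathcomp Require Import ring.
Set Implicit Arguments. Unset Strict Implicit. Unset Printing Implicit Defensive.
Import Order.TTheory GRing.Theory Num.Theory.
Import numFieldNormedType.Exports.
Local Open Scope ring_scope.

(* Differentiating F(1, z_1(z'), z') = 0 along z_i gives F_i = - a_i F_1, and
   Euler's identity sum_k Z_k F_k = d F = 0 then gives
   F_0 = - F_1 (z_1 - sum_k a_k z_k).  Hence
   rho = (1 + |a|^2 + |z_1 - sum_k a_k z_k|^2) / (1 + |z|^2), and what is left
   is a rational identity: g_(i,.) and g^(k,.) are combinations of delta, a,
   conj a, z and conj z, so the sum over j only involves the Gram sums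
   sum a conj(a), sum a z, sum conj(a) conj(z) and sum z conj(z). *)

Section PolynomialChainRule.
Variables (K : numFieldType) (V : normedModType K) (n : nat).
Variables (u : 'I_n -> V -> K) (du : 'I_n -> K) (x v : V).
Hypothesis u_der : forall k, is_derive x v (u k) (du k).

Let chain_rule (p : {mpoly K[n]}) :=
  is_derive x v (fun y => p.@[u^~ y]) (\sum_k du k * (p^`M(k)).@[u^~ x]).

Let chain_ruleC c : chain_rule c%:MP.
Proof.
rewrite /chain_rule (_ : (fun y => _) = cst c); last first.
  by apply/funext => y; rewrite mevalC.
by apply: is_derive_eq; rewrite big1 // => k _; rewrite mderivC meval0 mulr0.
Qed.

Let chain_ruleD p q : chain_rule p -> chain_rule q -> chain_rule (p + q).
Proof.
rewrite /chain_rule => dp dq; rewrite (_ : (fun y => _) =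
  (fun y => p.@[u^~ y]) + (fun y => q.@[u^~ y])); last first.
  by apply/funext => y; rewrite mevalD.
apply: is_derive_eq; rewrite -big_split; apply: eq_bigr => k _.
by rewrite mderivD mevalD mulrDr.
Qed.

Let chain_ruleM p q : chain_rule p -> chain_rule q -> chain_rule (p * q).
Proof.
rewrite /chain_rule => dp dq; rewrite (_ : (fun y => _) =
  (fun y => p.@[u^~ y]) * (fun y => q.@[u^~ y])); last first.
  by apply/funext => y; rewrite mevalM.
apply: is_derive_eq; rewrite /GRing.scale /= !mulr_sumr -big_split.
by apply: eq_bigr => k _; rewrite mderivM mevalD !mevalM /=; ring.
Qed.

Let chain_ruleX i : chain_rule 'X_i.
Proof.
rewrite /chain_rule (_ : (fun y => _) = u i); last first.
  by apply/funext => y; rewrite mevalXU.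
apply: is_derive_eq; rewrite (bigD1 i) //= big1 => [|k /negbTE ki].
  rewrite mderivX mevalZ mevalX mnm1E eqxx mul1r addr0.
  by rewrite big1 ?mulr1 // => l _; rewrite mnmBE subnn expr0.
by rewrite mderivX mnm1E eq_sym ki scale0r meval0 mulr0.
Qed.

Lemma is_derive_meval p :
  is_derive x v (fun y => p.@[u^~ y]) (\sum_k du k * (p^`M(k)).@[u^~ x]).
Proof.
have chain_rule1 : chain_rule 1 by rewrite -mpolyC1; exact: chain_ruleC.
elim/mpolyind: p => [|c m p _ _ dp].
  by rewrite -mpolyC0; exact: chain_ruleC.
apply: chain_ruleD => //; rewrite -mul_mpolyC mpolyXE_id.
apply: chain_ruleM; first exact: chain_ruleC.
apply: (big_ind chain_rule); [exact: chain_rule1 | exact: chain_ruleM |].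
move=> i _; elim: (m i) => [|k dXk]; first by rewrite expr0.
by rewrite exprS; exact: chain_ruleM.
Qed.

End PolynomialChainRule.

Lemma mpoly_euler (K : numFieldType) n d (F : {mpoly K[n]}) (Z : 'I_n -> K) :
  F \is ishomog1 d (mpoly_mdeg__canonical__mpoly_Measure n) ->
  \sum_k Z k * (F^`M(k)).@[Z] = d%:R * F.@[Z].
Proof.
move=> /dhomogP homF.
have F_scale t : F.@[fun k => t * Z k] = t ^+ d * F.@[Z].
  rewrite !mevalE mulr_sumr !big_seq; apply: eq_bigr => m /homF <-.
  under eq_bigr do rewrite exprMn; rewrite big_split /= prodrXr mulrCA.
  by rewrite /= mdegE.
have du k : is_derive (1 : K^o) 1 (fun t : K^o => t * Z k) (Z k).
  apply: is_derive_eq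
    (is_deriveM (is_derive_id _ _) (is_derive_cst (Z k) _ _)) _.
  by rewrite scaler0 add0r /GRing.scale /= mulr1.
have -> : \sum_k Z k * (F^`M(k)).@[Z] =
    'D_1 (fun t : K^o => F.@[fun k => t * Z k]) 1.
  have [_ ->] := is_derive_meval du F.
  by apply: eq_bigr => k _; congr (_ * _); apply: meval_eq => l; rewrite mul1r.
rewrite (_ : (fun t : K^o => _) = (@id K^o) ^+ d * cst F.@[Z]); last first.
  by apply/funext => t; rewrite F_scale /= exprfctE.
have [_ ->] := is_deriveM (is_deriveX d (is_derive_id (1 : K^o) 1))
  (is_derive_cst F.@[Z] (1 : K^o) 1).
by rewrite scaler0 add0r expr1n mulr1 /GRing.scale /= mulr1 mulrC.
Qed.

Lemma is_derive_mx_coord (K : numFieldType) m n (M v : 'M[K]_(m, n)) i j :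
  is_derive M v (fun N : 'M[K]_(m, n) => N i j) (v i j).
Proof.
have coord_lin : linear (fun N : 'M[K]_(m, n) => N i j).
  by move=> c A B; rewrite !mxE.
pose coord : {linear 'M[K]_(m, n) -> K^o} :=
  HB.pack (fun N : 'M[K]_(m, n) => N i j)
    (GRing.isLinear.Build _ _ _ _ _ coord_lin).
have coord_cont : continuous coord by exact: coord_continuous.
change (is_derive M v coord (coord v)).
apply: DeriveDef; first exact/diff_derivable/linear_differentiable.
by rewrite deriveE ?diff_lin //; exact: linear_differentiable.
Qed.

Section Chart.
Variables (R : rcfType) (m : nat) (z1 : CC R) (w : 'rV[CC R]_m).

Lemma chart_pt0 : chart_pt z1 w ord0 = 1.
Proof. by rewrite /chart_pt unlift_none. Qed.

Lemma chart_pt1 : chart_pt z1 w idx1 = z1.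
Proof. by rewrite /chart_pt liftK unlift_none. Qed.

Lemma chart_ptw l : chart_pt z1 w (idxw l) = w 0 l.
Proof. by rewrite /chart_pt !liftK. Qed.

End Chart.

Lemma big_chart (C : nmodType) m (f : 'I_m.+2 -> C) :
  \sum_k f k = f ord0 + f idx1 + \sum_l f (idxw l).
Proof. by rewrite !big_ord_recl addrA. Qed.

Lemma implicit_derivative (R : realType) m (F : {mpoly (CC R)[m.+2]})
    (U : set 'rV[(CC R)^o]_m) (phi : 'rV[(CC R)^o]_m -> (CC R)^o)
    (w : 'rV[(CC R)^o]_m) (j : 'I_m) :
  open U -> holomorphic_on U phi ->
  (forall v, U v -> F.@[chart_pt (phi v) v] = 0) -> U w ->
  pder phi w j * dF F idx1 (chart_pt (phi w) w) +
  dF F (idxw j) (chart_pt (phi w) w) = 0.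
Proof.
move=> oU hol F0 Uw; pose e : 'rV[(CC R)^o]_m := delta_mx 0 j.
pose u (k : 'I_m.+2) (y : 'rV[(CC R)^o]_m) : (CC R)^o := chart_pt (phi y) y k.
have u0 : u ord0 = cst 1 by apply/funext => y; exact: chart_pt0.
have u1 : u idx1 = phi by apply/funext => y; exact: chart_pt1.
have uw l : u (idxw l) = fun y => y 0 l by apply/funext => y; exact: chart_ptw.
have u_der k : is_derive w e (u k) ('D_e (u k) w).
  apply: derivableP; case: (unliftP ord0 k) => [k' ->|->]; last by rewrite u0.
  case: (unliftP ord0 k') => [l ->|->]; last first.
    by rewrite u1; exact/diff_derivable/hol.
  by rewrite uw; exact/diff_derivable/differentiable_coord.
have Fu_const : \forall y \near w, F.@[u^~ y] = cst 0 y.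
  by apply: filterS (open_nbhs_nbhs (conj oU Uw)) => y; exact: F0.
have Duw l : 'D_e (u (idxw l)) w = e 0 l.
  by rewrite uw; have [_ ->] := is_derive_mx_coord w e 0 l.
have [_] := is_derive_meval u_der F.
rewrite (near_eq_derive _ Fu_const) derive_cst big_chart u0 u1 derive_cst.
rewrite mul0r add0r (bigD1 j) //= big1 => [|l /negbTE lj]; last first.
  by rewrite Duw mxE lj mul0r.
by rewrite Duw mxE !eqxx mul1r addr0 => /esym.
Qed.

Lemma euler_graph (R : rcfType) m d (F : {mpoly (CC R)[m.+2]}) z1
    (w : 'rV[CC R]_m) (a : 'I_m -> CC R) :
  let Z := chart_pt z1 w in
  F \is ishomog1 d (mpoly_mdeg__canonical__mpoly_Measure m.+2) ->
  F.@[Z] = 0 -> (forall l, dF F (idxw l) Z = - (a l * dF F idx1 Z)) ->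
  dF F ord0 Z = - (dF F idx1 Z * (z1 - \sum_l a l * w 0 l)).
Proof.
move=> Z homF F0 Fw; have := mpoly_euler Z homF.
rewrite F0 mulr0 big_chart /Z chart_pt0 chart_pt1 mul1r -/Z.
rewrite -/(dF F ord0 Z) -/(dF F idx1 Z).
have -> : \sum_l Z (idxw l) * dF F (idxw l) Z =
    - (dF F idx1 Z * \sum_l a l * w 0 l).
  rewrite mulr_sumr -sumrN; apply: eq_bigr => l _.
  by rewrite /Z chart_ptw -/Z Fw; ring.
by move=> E; apply/eqP; rewrite -subr_eq0 -[X in _ == X]E; apply/eqP; ring.
Qed.

Section SquaredModulus.
Variable R : rcfType.
Implicit Types x y : CC R.

Lemma sqn_ge0 x : 0 <= sqn x.
Proof. exact: mul_conjC_ge0. Qed.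

Lemma sqnM x y : sqn (x * y) = sqn x * sqn y.
Proof. by rewrite /sqn rmorphM /=; ring. Qed.

Lemma sqnN x : sqn (- x) = sqn x.
Proof. by rewrite /sqn rmorphN /=; ring. Qed.

Lemma sum_sqn_ge0 (I : Type) (r : seq I) (P : pred I) (f : I -> CC R) :
  0 <= \sum_(i <- r | P i) sqn (f i).
Proof. by apply: sumr_ge0 => i _; exact: sqn_ge0. Qed.

Lemma sum_sqn_chart m (G : 'I_m.+2 -> CC R) (a : 'I_m -> CC R) c :
  G ord0 = - (G idx1 * c) -> (forall l, G (idxw l) = - (a l * G idx1)) ->
  \sum_k sqn (G k) = sqn (G idx1) * (1 + \sum_l sqn (a l) + sqn c).
Proof.
move=> G0 Gw; rewrite big_chart G0 sqnN sqnM.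
under eq_bigr do rewrite Gw sqnN sqnM.
by rewrite -mulr_suml; ring.
Qed.

End SquaredModulus.

Lemma sumr_deltal (C : pzSemiRingType) (I : finType) (i : I) (F : I -> C) :
  \sum_j (i == j)%:R * F j = F i.
Proof.
rewrite (bigD1 i) //= eqxx mul1r big1 ?addr0 // => j /negbTE.
by rewrite eq_sym => ->; rewrite mul0r.
Qed.

(* The primed variables stand for complex conjugates; the identity holds
   with them as independent indeterminates. *)
Section GraphMetricInverse.
Variables (C : fieldType) (m : nat) (z1 z1' : C) (z z' a a' : 'I_m -> C).

Let nz := z1 * z1' + \sum_j z j * z' j.
Let na := \sum_j a j * a' j.
Let S := \sum_j a j * z j.
Let S' := \sum_j a' j * z' j.

Definition graph_metric i j : C :=
  ((i == j)%:R + a i * a' j) / (1 + nz)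
  - (z' i + z1' * a i) * (z j + z1 * a' j) / (1 + nz) ^+ 2.

Definition graph_metric_inv rho i j : C :=
  rho^-1 * (rho * (1 + nz) * (j == i)%:R - a j * a' i + z' j * z i * (1 + na))
  - rho^-1 * (a j * z i * (S' - z1') + z' j * a' i * (S - z1)).

Lemma graph_metric_mulV rho i k :
  1 + nz != 0 -> 1 + na + (z1 - S) * (z1' - S') != 0 ->
  rho = (1 + na + (z1 - S) * (z1' - S')) / (1 + nz) ->
  \sum_j graph_metric i j * graph_metric_inv rho k j = (i == k)%:R.
Proof.
move=> A0 P0 rhoE; have rho0 : rho != 0 by rewrite rhoE mulf_neq0 ?invr_eq0.
pose c0 := (1 + nz)^-1.
pose c1 := a i / (1 + nz) - (z' i + z1' * a i) * z1 / (1 + nz) ^+ 2.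
pose c2 := - (z' i + z1' * a i) / (1 + nz) ^+ 2.
pose d0 := rho^-1 * rho * (1 + nz).
pose d1 := rho^-1 * (- a' k - z k * (S' - z1')).
pose d2 := rho^-1 * (z k * (1 + na) - a' k * (S - z1)).
have termE j : graph_metric i j * graph_metric_inv rho k j =
    (i == j)%:R * (c0 * d0 * (j == k)%:R + c0 * d1 * a j + c0 * d2 * z' j)
    + (k == j)%:R * ((a' j * c1 + z j * c2) * d0)
    + a j * a' j * (c1 * d1) + a' j * z' j * (c1 * d2)
    + a j * z j * (c2 * d1) + z j * z' j * (c2 * d2).
  rewrite /graph_metric /graph_metric_inv [j == k]eq_sym.
  by rewrite /c0 /c1 /c2 /d0 /d1 /d2; field; rewrite A0 rho0.
rewrite (eq_bigr _ (fun j _ => termE j)) !big_split /= -!mulr_suml.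
rewrite !sumr_deltal -/na -/S -/S'.
move: A0; rewrite /c0 /c1 /c2 /d0 /d1 /d2 rhoE /nz => A0.
by field; rewrite A0 P0.
Qed.

End GraphMetricInverse.

Theorem lemma2p1 (R : realType) (m d : nat)
    (F : mpoly.mpoly m.+2 (CC R))
    (U : set 'rV[(CC R)^o]_m) (phi : 'rV[(CC R)^o]_m -> (CC R)^o)
    (w : 'rV[(CC R)^o]_m) :
  F \is mpoly.ishomog1 d (mpoly.mpoly_mdeg__canonical__mpoly_Measure m.+2) ->
  smooth_hypersurface F ->
  open U ->
  holomorphic_on U phi ->
  (forall v, U v -> mpoly.meval (chart_pt (phi v) v) F = 0) ->
  (forall v, U v -> dF F idx1 (chart_pt (phi v) v) != 0) ->
  U w ->
  let z1 : CC R := phi w in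
  let zz : 'I_m -> CC R := fun j => w 0 j in
  let a : 'I_m -> CC R := pder phi w in
  let Z := chart_pt z1 w in
  let nz : CC R := sqn z1 + \sum_(j < m) sqn (zz j) in
  let na : CC R := \sum_(j < m) sqn (a j) in
  let rho : CC R :=
    (\sum_(k < m.+2) sqn (dF F k Z)) / ((1 + nz) * sqn (dF F idx1 Z)) in
  let g : 'I_m -> 'I_m -> CC R := fun i j =>
    ((i == j)%:R + a i * (a j)^*) / (1 + nz)
    - ((zz i)^* + z1^* * a i) * (zz j + z1 * (a j)^*) / (1 + nz) ^+ 2 in
  let ginv : 'I_m -> 'I_m -> CC R := fun i j =>
    rho^-1 * (rho * (1 + nz) * (j == i)%:R - a j * (a i)^*
              + (zz j)^* * zz i * (1 + na))
    - rho^-1 * (a j * zz i * (\sum_(k < m) (a k)^* * (zz k)^* - z1^*)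
                + (zz j)^* * (a i)^* * (\sum_(k < m) a k * zz k - z1)) in
  forall i k : 'I_m, \sum_(j < m) g i j * ginv k j = (i == k)%:R.
Proof.
move=> homF _ oU hol F0 F1_neq0 Uw z1 zz a Z nz na rho g ginv i k.
pose f1 := dF F idx1 Z; pose S := \sum_l a l * zz l.
pose S' := \sum_l (a l)^* * (zz l)^*.
have dFw l : dF F (idxw l) Z = - (a l * f1).
  by apply/eqP; rewrite -addr_eq0 addrC (implicit_derivative l oU hol F0 Uw).
have dF0 : dF F ord0 Z = - (f1 * (z1 - S)) := euler_graph homF (F0 w Uw) dFw.
have sqn_z1S : sqn (z1 - S) = (z1 - S) * (z1^* - S').
  rewrite /sqn rmorphB rmorph_sum; congr (_ * (_ - _)).
  by apply: eq_bigr => l _; rewrite rmorphM.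
have nz_neq0 : 1 + nz != 0.
  by rewrite paddr_eq0 ?oner_eq0 ?ler01 ?addr_ge0 ?sqn_ge0 ?sum_sqn_ge0.
have P_neq0 : 1 + na + (z1 - S) * (z1^* - S') != 0.
  rewrite -sqn_z1S -addrA paddr_eq0 ?oner_eq0 ?ler01 //.
  by rewrite addr_ge0 ?sqn_ge0 ?sum_sqn_ge0.
have rhoE : rho = (1 + na + (z1 - S) * (z1^* - S')) / (1 + nz).
  have f1_neq0 : sqn f1 != 0 by rewrite mulf_neq0 ?conjC_eq0 ?F1_neq0.
  rewrite /rho (sum_sqn_chart (G := fun k => dF F k Z) dF0 dFw).
  rewrite -/f1 -sqn_z1S -/na.
  by field; rewrite nz_neq0 f1_neq0.
exact: (graph_metric_mulV (z1 := z1) (z1' := z1^*) (z := zz)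
  (z' := fun j => (zz j)^*) (a := a) (a' := fun j => (a j)^*) i k
  nz_neq0 P_neq0 rhoE).
Qed.
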